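(* Let $n=p^2q^2$ with primes $3\le p<q$, and let $\mathcal{D}_{S_1},\mathcal{D}_{S_2}\subseteq\mathcal{D}_{[n]}\setminus\{n\}$ with $1\in\mathcal{D}_{S_1}\cap\mathcal{D}_{S_2}$. If $\mathrm{Spec}(\mathrm{ICG}(n,\mathcal{D}_{S_1}))=\mathrm{Spec}(\mathrm{ICG}(n,\mathcal{D}_{S_2}))$, then $\mathcal{D}_{S_1}=\mathcal{D}_{S_2}$.
   Context: Identify $\mathbb{Z}_n$ with $[n]=\{1,\dots,n\}$. For a divisor $d$ of $n$, $G_n(d)=\{j\in[n]:\gcd(j,n)=d\}$; $\mathcal{D}_{[n]}$ is the set of positive divisors of $n$. For $\mathcal{D}\subseteq\mathcal{D}_{[n]}\setminus\{n\}$, $\mathrm{ICG}(n,\mathcal{D})=\mathrm{Cay}(\mathbb{Z}_n,S)$ with $S=\bigcup_{d\in\mathcal{D}}G_n(d)$, and $\mathcal{D}=\mathcal{D}_S$. $\mathrm{Spec}$ is the multiset of adjacency eigenvalues. *)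

From mathcomp Require Import all_boot all_order all_algebra all_field.
Set Implicit Arguments. Unset Strict Implicit. Unset Printing Implicit Defensive.
Import GRing.Theory Num.Theory.
Local Open Scope ring_scope.

(* Z_n is represented by 'I_n = {0,...,n-1}; the element 0 plays the role of n
   in [n] = {1,...,n} (note gcd(0,n) = n = gcd(n,n)). *)

(* Adjacency matrix of ICG(n, D) = Cay(Z_n, S), S = U_{d in D} G_n(d):
   i ~ j  iff  (j - i mod n) in S  iff  gcd((j - i) mod n, n) in D. *)
Definition ICG_adj (n : nat) (D : seq nat) : 'M[algC]_n :=
  \matrix_(i < n, j < n)
    (if gcdn ((j + n - i) %% n) n \in D then 1 else 0).

Definition Spec (n : nat) (A : 'M[algC]_n) : algC -> nat :=
  fun x => mup x (char_poly A).

Definition proper_divisor_set (n : nat) (D : seq nat) : Prop :=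
  forall d, d \in D -> (d %| n)%N && (d != n).

From mathcomp Require Import all_boot all_order all_algebra all_field.
From mathcomp Require Import zify ssrZ ring.
From Stdlib Require ZArith Lia.

(* ICG(n, D) is a circulant matrix, so its eigenvalues are the sums
   lambda_k = \sum_(m < n) [gcd(m, n) \in D] w^(m k) for a primitive n-th root w.
   For n = p^2 q^2, grouping m by gcd(m, n) = p^a q^b turns lambda_k into a sum of
   products of local Ramanujan sums c_(p^(2-a))(k) c_(q^(2-b))(k); these only depend
   on the exponents i, j of p, q in gcd(k, n) and are integer polynomials in p and q.
   When 1 \in D and n \notin D, the set of exponent pairs of D is one of 2^7
   patterns, and a finite computation shows that two distinct patterns always have
   an eigenvalue polynomial of one differing, at every pair of odd primes
   3 <= p < q, from all eigenvalue polynomials of the other: either the difference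
   has constant sign, which is certified by the substitution p = 3 + 2 s,
   q = 5 + 2 s + 2 t with s, t >= 0, or it is one of four polynomials which cannot
   vanish because q is a prime, hence q <> p^2. Equal spectra thus force equal
   patterns, hence D1 = D2. *)

Set Implicit Arguments.
Unset Strict Implicit.
Unset Printing Implicit Defensive.

Import GRing.Theory Num.Theory.

Local Open Scope ring_scope.

Lemma sum_expr_root1 (R : idomainType) (z : R) N : z ^+ N = 1 ->
  \sum_(k < N) z ^+ k = if z == 1 then N%:R else 0.
Proof.
move=> zN1; case: eqP => [->|/eqP z_neq1].
  by rewrite (eq_bigr (fun=> 1)) ?sumr_const ?card_ord // => k _; rewrite expr1n.
apply/eqP; have := subrX1 z N; rewrite zN1 subrr => /esym/eqP.
by rewrite mulf_eq0 subr_eq0 (negbTE z_neq1).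
Qed.

Lemma sum_dvdn_mul (R : nmodType) (F : nat -> R) t M : (0 < t)%N ->
  \sum_(m < (t * M)%N | (t %| m)%N) F m = \sum_(j < M) F (t * j)%N.
Proof.
move=> t_gt0; elim: M => [|M IH]; first by rewrite muln0 !big_ord0.
rewrite big_ord_recr /= -IH -!(big_mkord (fun m => (t %| m)%N)).
rewrite (big_cat_nat _ (n := (t * M)%N)) ?leq_mul2l ?leqnSn ?orbT //=; congr (_ + _).
rewrite mulnS addnC big_ltn_cond; last by lia.
rewrite dvdn_mulr // big1_seq ?addr0 // => m.
rewrite mem_index_iota => /andP[/dvdnP[c ->] /andP[lt_tM_ct lt_ct_tMt]].
move: lt_tM_ct lt_ct_tMt; rewrite [(c * t)%N]mulnC addnC -mulnS !ltn_pmul2l // ltnS.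
by move=> /leq_trans/[apply]; rewrite ltnn.
Qed.

Section RootOfUnity.

Variables (n : nat) (w : algC).
Hypothesis w_prim : n.-primitive_root w.

Let w_n : w ^+ n = 1 := prim_expr_order w_prim.

Lemma sum_dvdn_prim_root t k : (0 < t)%N -> (t %| n)%N ->
  \sum_(m < n | (t %| m)%N) w ^+ (m * k)%N = if (n %/ t %| k)%N then (n %/ t)%:R else 0.
Proof.
move=> t_gt0 t_dvd_n; have n_eq : n = (t * (n %/ t))%N by rewrite mulnC divnK.
rewrite -(big_mkord (fun m => (t %| m)%N) (fun m => w ^+ (m * k)%N)) {1}n_eq big_mkord.
rewrite (sum_dvdn_mul (fun m => w ^+ (m * k)%N)) //.
under eq_bigr do rewrite mulnAC exprM.
rewrite sum_expr_root1; last by rewrite -exprM mulnAC -n_eq exprM w_n expr1n.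
by rewrite -(prim_order_dvd w_prim) {1}n_eq dvdn_pmul2l.
Qed.

Lemma sum_prim_root_diff (i l : 'I_n) :
  \sum_(k < n) w ^+ ((i + n - l) * k)%N = if i == l then n%:R else 0.
Proof.
under eq_bigr do rewrite exprM.
rewrite sum_expr_root1; last by rewrite -exprM mulnC exprM w_n expr1n.
rewrite -(prim_order_dvd w_prim); have := ltn_ord i; have := ltn_ord l.
case: eqP => [->|i_neq_l] lt_l lt_i; first by rewrite addKn dvdnn.
case: ifP => // /dvdnP[[|[|c]] eq_c]; exfalso; [lia| |nia].
by case: i_neq_l; apply: ord_inj; lia.
Qed.

Section Circulant.

Variable a : nat -> algC.
Hypothesis a_periodic : forall m, a (m + n)%N = a m.

Definition circulant : 'M[algC]_n := \matrix_(i < n, j < n) a (j + n - i)%N.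

Definition circulant_eigval (k : nat) : algC := \sum_(m < n) a m * w ^+ (m * k)%N.

Let n_gt0 : (0 < n)%N := prim_order_gt0 w_prim.

Lemma sum_periodic_shift (G : nat -> algC) : (forall m, G (m + n)%N = G m) ->
  forall c, \sum_(i < n) G (c + i)%N = \sum_(i < n) G i.
Proof.
move=> G_periodic; elim=> [|c IH]; first by under eq_bigr do rewrite add0n.
rewrite -IH; move: n_gt0 G_periodic; case: (n) => [//|n'] _ G_periodic.
rewrite big_ord_recr big_ord_recl /= addn0 addSnnS G_periodic addrC; congr (_ + _).
by apply: eq_bigr => i _; rewrite /bump /= add1n addSnnS.
Qed.

Lemma sum_periodic_reflect (G : nat -> algC) : (forall m, G (m + n)%N = G m) ->
  forall j, \sum_(i < n) G (j + n - i)%N = \sum_(i < n) G i.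
Proof.
move=> G_periodic j; rewrite (reindex_inj rev_ord_inj) /= -(sum_periodic_shift G_periodic j.+1).
by apply: eq_bigr => i _; congr G; have := ltn_ord i; rewrite /= subnBA //; lia.
Qed.

Let expr_periodic k m : w ^+ ((m + n) * k)%N = w ^+ (m * k)%N.
Proof. by rewrite mulnDl exprD [w ^+ (n * k)%N]exprM w_n expr1n mulr1. Qed.

Let term_periodic k m : a (m + n)%N * w ^+ ((m + n) * k)%N = a m * w ^+ (m * k)%N.
Proof. by rewrite a_periodic expr_periodic. Qed.

Definition fourier_row (k : nat) : 'rV[algC]_n := \row_j w ^+ ((n - j) * k)%N.
Definition fourier_col (k : nat) : 'cV[algC]_n := \col_i w ^+ (i * k)%N.

Lemma fourier_row_eigen k : fourier_row k *m circulant = circulant_eigval k *: fourier_row k.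
Proof.
apply/rowP => j; rewrite !mxE; under eq_bigr do rewrite !mxE.
have term_eq (i : 'I_n) : w ^+ ((n - i) * k)%N * a (j + n - i)%N =
    a (j + n - i)%N * w ^+ ((j + n - i) * k)%N * w ^+ ((n - j) * k)%N.
  rewrite -mulrA -exprD -mulnDl mulrC.
  have -> : (j + n - i + (n - j) = n - i + n)%N by have := ltn_ord i; have := ltn_ord j; lia.
  by rewrite expr_periodic.
by rewrite (eq_bigr _ (fun i _ => term_eq i)) -mulr_suml (sum_periodic_reflect (term_periodic k)).
Qed.

Lemma circulant_fourier_col k : circulant *m fourier_col k = circulant_eigval k *: fourier_col k.
Proof.
apply/colP => i; rewrite !mxE; under eq_bigr do rewrite !mxE.
have term_eq (j : 'I_n) : a (j + n - i)%N * w ^+ (j * k)%N =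
    a (n - i + j)%N * w ^+ ((n - i + j) * k)%N * w ^+ (i * k)%N.
  rewrite -mulrA -exprD -mulnDl.
  have -> : (n - i + j + i = j + n)%N by have := ltn_ord i; lia.
  have -> : (j + n - i = n - i + j)%N by have := ltn_ord i; lia.
  by rewrite expr_periodic.
rewrite (eq_bigr _ (fun j _ => term_eq j)) -mulr_suml.
by rewrite (sum_periodic_shift (term_periodic k)) mulrC.
Qed.

Lemma circulant_eigenvalue k : eigenvalue circulant (circulant_eigval k).
Proof.
apply/eigenvalueP; exists (fourier_row k); first exact: fourier_row_eigen.
apply/eqP => /rowP/(_ (Ordinal n_gt0)); rewrite !mxE => /eqP.
by rewrite expf_eq0 (prim_root_eq0 w_prim) eqn0Ngt n_gt0 andbF.
Qed.

(* A left eigenvector for an eigenvalue other than every [circulant_eigval k] is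
   orthogonal to every [fourier_col k]; Fourier inversion then makes it vanish. *)
Lemma circulant_eigenvalueP x : eigenvalue circulant x -> exists k : 'I_n, x = circulant_eigval k.
Proof.
move=> /eigenvalueP[v v_eigen v_neq0].
case: (pickP (fun k : 'I_n => x == circulant_eigval k)) => [k /eqP ->|x_neq]; first by exists k.
have v_orth (k : 'I_n) : (v *m fourier_col k) 0 0 = 0.
  have : x *: (v *m fourier_col k) = circulant_eigval k *: (v *m fourier_col k).
    by rewrite scalemxAl -v_eigen -mulmxA circulant_fourier_col -scalemxAr.
  move/eqP; rewrite -subr_eq0 -scalerBl scaler_eq0 subr_eq0 x_neq /=.
  by move/eqP ->; rewrite mxE.
case/eqP: v_neq0; apply/rowP => l; rewrite mxE.
have : \sum_(k < n) (v *m fourier_col k) 0 0 * w ^+ ((n - l) * k)%N = 0.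
  by rewrite big1 // => k _; rewrite v_orth mul0r.
under eq_bigr do rewrite mxE mulr_suml.
rewrite exchange_big /=.
under eq_bigr => i _.
  under eq_bigr => k _ do rewrite mxE -mulrA -exprD -mulnDl addnBA ?(ltnW (ltn_ord l)) //.
  rewrite -mulr_sumr sum_prim_root_diff.
  over.
rewrite (bigD1 l) //= eqxx big1 ?addr0 => [|i /negbTE ->]; last by rewrite mulr0.
by move/eqP; rewrite mulf_eq0 pnatr_eq0 eqn0Ngt n_gt0 orbF => /eqP.
Qed.

End Circulant.

End RootOfUnity.

(* For a prime [x] and [x ^ i] the [x]-part of [gcd(k, x ^ 2)], [multsum x i u] is
   the sum of [w ^+ (m * k)] over the multiples [m] of [x ^ u] modulo [x ^ 2], for a
   primitive [x ^ 2]-th root [w] (and 0 if [u > 2]), and [ramanujan x i a] is the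
   Ramanujan sum [c_(x ^ (2 - a))(k)]. *)
Definition multsum (x i u : nat) : algC :=
  if ((u <= 2) && (2 - u <= i))%N then (x ^ (2 - u))%N%:R else 0.

Definition ramanujan (x i a : nat) : algC := multsum x i a - multsum x i a.+1.

Lemma natr_eqn (R : pzRingType) (i a : nat) :
  (i == a)%:R = (a <= i)%N%:R - (a < i)%N%:R :> R.
Proof.
by rewrite eq_sym leq_eqVlt; case: eqP => [->|_] /=; rewrite ?ltnn ?subr0 ?subrr.
Qed.

Section DivisorsPQ.

Variables p q : nat.
Hypotheses (p_prime : prime p) (q_prime : prime q) (p_neq_q : p != q).

Local Notation n := (p ^ 2 * q ^ 2)%N.
Local Notation vp k := (logn p (gcdn k n)).
Local Notation vq k := (logn q (gcdn k n)).

Let p_gt0 : (0 < p)%N := prime_gt0 p_prime.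
Let q_gt0 : (0 < q)%N := prime_gt0 q_prime.

Lemma n_gt0 : (0 < n)%N.
Proof. by rewrite muln_gt0 !expn_gt0 p_gt0 q_gt0. Qed.

Lemma logn_pq r a b : prime r -> logn r (p ^ a * q ^ b) = (a * (r == p) + b * (r == q))%N.
Proof. by move=> r_prime; rewrite lognM ?expn_gt0 ?p_gt0 ?q_gt0 // !lognX !logn_prime. Qed.

Lemma lognp_pq a b : logn p (p ^ a * q ^ b) = a.
Proof. by rewrite logn_pq // eqxx (negbTE p_neq_q) muln1 muln0 addn0. Qed.

Lemma lognq_pq a b : logn q (p ^ a * q ^ b) = b.
Proof. by rewrite logn_pq // eqxx eq_sym (negbTE p_neq_q) muln1 muln0. Qed.

Lemma eqn_pq a b c d : (p ^ a * q ^ b == p ^ c * q ^ d)%N = ((a, b) == (c, d)).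
Proof.
apply/eqP/eqP => [eq_pq|[-> ->]] //.
by move: (congr1 (logn p) eq_pq) (congr1 (logn q) eq_pq); rewrite !lognp_pq !lognq_pq => -> ->.
Qed.

Lemma dvdn_pq_logn d : (d %| n)%N ->
  [/\ d = (p ^ logn p d * q ^ logn q d)%N, (logn p d <= 2)%N & (logn q d <= 2)%N].
Proof.
move=> d_dvd_n; have d_gt0 : (0 < d)%N := dvdn_gt0 n_gt0 d_dvd_n.
have [lep leq] := (dvdn_leq_log p n_gt0 d_dvd_n, dvdn_leq_log q n_gt0 d_dvd_n).
rewrite lognp_pq in lep; rewrite lognq_pq in leq; split => //.
apply: eqn_from_log => //; first by rewrite muln_gt0 !expn_gt0 p_gt0 q_gt0.
move=> r; have [r_prime|r_nprime] := boolP (prime r); last first.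
  by rewrite lognE (negbTE r_nprime) [RHS]lognE (negbTE r_nprime).
have [->|r_neq_p] := eqVneq r p; first by rewrite lognp_pq.
have [->|r_neq_q] := eqVneq r q; first by rewrite lognq_pq.
have := dvdn_leq_log r n_gt0 d_dvd_n.
by rewrite !logn_pq // (negbTE r_neq_p) (negbTE r_neq_q) !muln0 leqn0 => /eqP.
Qed.

Lemma dvdn_pq a b m : (a <= 2)%N -> (b <= 2)%N ->
  (p ^ a * q ^ b %| m)%N = (a <= vp m)%N && (b <= vq m)%N.
Proof.
have gcd_gt0 : (0 < gcdn m n)%N by rewrite gcdn_gt0 n_gt0 orbT.
move=> a_le2 b_le2; rewrite Gauss_dvd; last first.
  by rewrite coprimeXl // coprimeXr // prime_coprime // dvdn_prime2 // p_neq_q.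
rewrite -!pfactor_dvdn // !dvdn_gcd.
by rewrite (dvdn_mulr _ (dvdn_exp2l p a_le2)) (dvdn_mull _ (dvdn_exp2l q b_le2)) !andbT.
Qed.

Lemma eq_gcd_pq m a b : (gcdn m n == p ^ a * q ^ b)%N = (vp m == a) && (vq m == b).
Proof.
have [g_eq _ _] := dvdn_pq_logn (dvdn_gcdr m n).
by rewrite [in LHS]g_eq eqn_pq xpair_eqE.
Qed.

Variable w : algC.
Hypothesis w_prim : n.-primitive_root w.

Lemma sum_multiples u v k :
  \sum_(m < n) ((u <= vp m) && (v <= vq m))%N%:R * w ^+ (m * k)%N =
  multsum p (vp k) u * multsum q (vq k) v.
Proof.
have [u_le2|u_gt2] := leqP u 2; last first.
  rewrite /multsum (ltn_geF u_gt2) mul0r big1 // => m _.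
  have [_ vp_le2 _] := dvdn_pq_logn (dvdn_gcdr m n).
  by rewrite (ltn_geF (leq_ltn_trans vp_le2 u_gt2)) mul0r.
have [v_le2|v_gt2] := leqP v 2; last first.
  rewrite /multsum (ltn_geF v_gt2) mulr0 big1 // => m _.
  have [_ _ vq_le2] := dvdn_pq_logn (dvdn_gcdr m n).
  by rewrite (ltn_geF (leq_ltn_trans vq_le2 v_gt2)) andbF mul0r.
under eq_bigr do rewrite -dvdn_pq // mulr_natl mulrb.
rewrite -big_mkcond sum_dvdn_prim_root ?muln_gt0 ?expn_gt0 ?p_gt0 ?q_gt0 //; last first.
  by rewrite dvdn_mul // dvdn_exp2l.
have n_eq : n = (p ^ u * q ^ v * (p ^ (2 - u) * q ^ (2 - v)))%N.
  by rewrite mulnACA -!expnD !subnKC.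
have -> : (n %/ (p ^ u * q ^ v) = p ^ (2 - u) * q ^ (2 - v))%N.
  by rewrite {1}n_eq mulKn // muln_gt0 !expn_gt0 p_gt0 q_gt0.
rewrite dvdn_pq ?leq_subr // /multsum u_le2 v_le2 /=.
by case: (2 - u <= _)%N; case: (2 - v <= _)%N; rewrite ?natrM ?mul0r ?mulr0.
Qed.

(* The indicator of [vp m == a] is [(a <= vp m) - (a < vp m)] ([natr_eqn]), which
   splits the class sum into four sums over multiples. *)
Lemma sum_gcd_class a b k :
  \sum_(m < n) (gcdn m n == p ^ a * q ^ b)%N%:R * w ^+ (m * k)%N =
  ramanujan p (vp k) a * ramanujan q (vq k) b.
Proof.
pose T u v := \sum_(m < n) ((u <= vp m) && (v <= vq m))%N%:R * w ^+ (m * k)%N.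
transitivity (T a b - T a b.+1 - T a.+1 b + T a.+1 b.+1).
  rewrite /T -!sumrB -big_split /=; apply: eq_bigr => m _.
  by rewrite eq_gcd_pq -!mulnb !natrM (natr_eqn _ (vp m)) (natr_eqn _ (vq m)); ring.
by rewrite /T !sum_multiples /ramanujan; ring.
Qed.

End DivisorsPQ.

Local Close Scope ring_scope.

Definition exp_pairs : seq (nat * nat) := [seq (i, j) | i <- iota 0 3, j <- iota 0 3].

Lemma mem_exp_pairs i j : ((i, j) \in exp_pairs) = (i <= 2) && (j <= 2).
Proof.
apply/allpairsP/andP => [[[a b] [ha hb [-> ->]]]|[hi hj]].
  by move: ha hb; rewrite !mem_iota => /andP[_ ha] /andP[_ hb].
by exists (i, j); rewrite !mem_iota.
Qed.

Fixpoint subseqs T (s : seq T) : seq (seq T) :=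
  if s is x :: s' then [seq x :: r | r <- subseqs s'] ++ subseqs s' else [:: [::]].

Lemma filter_subseqs (T : eqType) (a : pred T) s : filter a s \in subseqs s.
Proof.
elim: s => [|x s IH] //=; rewrite mem_cat.
by case: (a x); rewrite ?map_f ?IH ?orbT.
Qed.

(* Kept in a module: importing [ZArith] at top level would rebind the [%N] scope key. *)
Module IntPoly.
Import ZArith Lia.
Local Open Scope Z_scope.

Definition poly3 := (Z * Z * Z)%type.
Definition poly9 := (poly3 * poly3 * poly3)%type.

Definition eval3 (r : poly3) (x : Z) : Z :=
  let '(a0, a1, a2) := r in a0 + a1 * x + a2 * x ^ 2.

Definition eval9 (P : poly9) (x y : Z) : Z :=
  let '(P0, P1, P2) := P in eval3 P0 x + eval3 P1 x * y + eval3 P2 x * y ^ 2.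

Definition zero3 : poly3 := (0, 0, 0).
Definition zero9 : poly9 := (zero3, zero3, zero3).

Definition add3 (r s : poly3) : poly3 :=
  let '(a0, a1, a2) := r in let '(b0, b1, b2) := s in (a0 + b0, a1 + b1, a2 + b2).
Definition sub3 (r s : poly3) : poly3 :=
  let '(a0, a1, a2) := r in let '(b0, b1, b2) := s in (a0 - b0, a1 - b1, a2 - b2).
Definition scale3 (c : Z) (r : poly3) : poly3 :=
  let '(a0, a1, a2) := r in (c * a0, c * a1, c * a2).

Definition add9 (P Q : poly9) : poly9 :=
  let '(P0, P1, P2) := P in let '(Q0, Q1, Q2) := Q in (add3 P0 Q0, add3 P1 Q1, add3 P2 Q2).
Definition sub9 (P Q : poly9) : poly9 :=
  let '(P0, P1, P2) := P in let '(Q0, Q1, Q2) := Q in (sub3 P0 Q0, sub3 P1 Q1, sub3 P2 Q2).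
Definition tensor (r s : poly3) : poly9 :=
  let '(s0, s1, s2) := s in (scale3 s0 r, scale3 s1 r, scale3 s2 r).

Lemma eval3_sub r s x : eval3 (sub3 r s) x = eval3 r x - eval3 s x.
Proof. by case: r s => [[a0 a1] a2] [[b0 b1] b2] /=; ring. Qed.

Lemma eval9_zero x y : eval9 zero9 x y = 0.
Proof. by rewrite /=; ring. Qed.

Lemma eval9_add P Q x y : eval9 (add9 P Q) x y = eval9 P x y + eval9 Q x y.
Proof.
case: P Q => [[[[a0 a1] a2] [[b0 b1] b2]] [[c0 c1] c2]].
case=> [[[[d0 d1] d2] [[e0 e1] e2]] [[f0 f1] f2]] /=; ring.
Qed.

Lemma eval9_sub P Q x y : eval9 (sub9 P Q) x y = eval9 P x y - eval9 Q x y.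
Proof.
case: P Q => [[[[a0 a1] a2] [[b0 b1] b2]] [[c0 c1] c2]].
case=> [[[[d0 d1] d2] [[e0 e1] e2]] [[f0 f1] f2]] /=; ring.
Qed.

Lemma eval9_tensor r s x y : eval9 (tensor r s) x y = eval3 r x * eval3 s y.
Proof. by case: r s => [[a0 a1] a2] [[b0 b1] b2] /=; ring. Qed.

Definition mono3 (u : nat) : poly3 :=
  match u with 0%nat => (1, 0, 0) | 1%nat => (0, 1, 0) | _ => (0, 0, 1) end.

Definition multsum_poly (i u : nat) : poly3 :=
  if (u <= 2)%nat && (2 - u <= i)%nat then mono3 (2 - u) else zero3.

Definition ram_poly (i a : nat) : poly3 := sub3 (multsum_poly i a) (multsum_poly i a.+1).

Definition eig_poly (E : seq (nat * nat)) (ij : nat * nat) : poly9 :=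
  foldr (fun e P => add9 (tensor (ram_poly ij.1 e.1) (ram_poly ij.2 e.2)) P) zero9 E.

Definition eig_polys (E : seq (nat * nat)) : seq poly9 := [seq eig_poly E e | e <- exp_pairs].

Definition eig_values (p q : nat) (E : seq (nat * nat)) : seq Z :=
  [seq eval9 P (Z.of_nat p) (Z.of_nat q) | P <- eig_polys E].

Lemma eval3_mono3 u x : (u <= 2)%nat -> eval3 (mono3 u) (Z.of_nat x) = Z.of_nat (expn x u).
Proof.
by case: u => [|[|[|u]]] // _; cbv [eval3 mono3]; rewrite ?expnS ?expn0 ?Nat2Z.inj_mul; ring.
Qed.

Lemma eval3_multsum_poly i u (x : nat) :
  eval3 (multsum_poly i u) (Z.of_nat x) =
  Z.of_nat (if (u <= 2) && (2 - u <= i) then expn x (2 - u) else 0)%nat.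
Proof.
rewrite /multsum_poly; case: ifP => _; last by cbv [eval3 zero3]; ring.
by rewrite eval3_mono3 ?leq_subr.
Qed.

Definition eval_monos (m : seq (Z * Z)) (k : seq Z) (s t : Z) : Z :=
  foldr (fun '(c, (a, b)) acc => c * s ^ a * t ^ b + acc) 0 (zip k m).

Definition subZ (k l : seq Z) : seq Z := [seq x.1 - x.2 | x <- zip k l].

Lemma eval_monos_sub m k l s t : size k = size m -> size l = size m ->
  eval_monos m (subZ k l) s t = eval_monos m k s t - eval_monos m l s t.
Proof.
elim: m k l => [|[a b] m IH] [|c k] [|d l] // [sk] [sl].
have := IH k l sk sl; rewrite /eval_monos /subZ /=.
move=> ->; ring.
Qed.

Definition pos_cert (k : seq Z) : bool :=
  if k is c :: k' then (0 <? c) && all (Z.leb 0) k' else false.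

Lemma eval_monos_ge0 m k s t : 0 <= s -> 0 <= t -> all (Z.leb 0) k -> 0 <= eval_monos m k s t.
Proof.
move=> s_ge0 t_ge0; elim: k m => [|c k IH] [|[a b] m] //= /andP[/Z.leb_le c_ge0 k_ge0].
have := IH m k_ge0; rewrite /eval_monos /=.
have : 0 <= c * s ^ a * t ^ b by apply: Z.mul_nonneg_nonneg; [apply: Z.mul_nonneg_nonneg|];
  try apply: Z.pow_nonneg.
lia.
Qed.

Lemma pos_cert_sound m k s t : 0 <= s -> 0 <= t -> pos_cert k ->
  0 < eval_monos ((0, 0) :: m) k s t.
Proof.
move=> s_ge0 t_ge0; case: k => [|c k] //= /andP[/Z.ltb_lt c_gt0 k_ge0].
have := @eval_monos_ge0 m k s t s_ge0 t_ge0 k_ge0; rewrite /eval_monos /=; lia.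
Qed.

(* [shift P] lists the coefficients of [P (3 + 2 s) (5 + 2 s + 2 t)] on the monomials
   [s ^ a * t ^ b] of [shift_monomials]; odd [3 <= p < q] are exactly these values with
   [s, t >= 0], so a shift passing [pos_cert] certifies [P p q > 0]. *)
Definition shift_monomials : seq (Z * Z) :=
  [:: (0, 0); (0, 1); (0, 2); (1, 0); (1, 1); (1, 2); (2, 0); (2, 1); (2, 2);
      (3, 0); (3, 1); (4, 0)].

Definition shift (P : poly9) : seq Z :=
  let '((c00, c10, c20), (c01, c11, c21), (c02, c12, c22)) := P in
  [:: c00 + 5 * c01 + 25 * c02 + 3 * c10 + 15 * c11 + 75 * c12 + 9 * c20 + 45 * c21
        + 225 * c22;
      2 * c01 + 20 * c02 + 6 * c11 + 60 * c12 + 18 * c21 + 180 * c22;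
      4 * c02 + 12 * c12 + 36 * c22;
      2 * c01 + 20 * c02 + 2 * c10 + 16 * c11 + 110 * c12 + 12 * c20 + 78 * c21
        + 480 * c22;
      8 * c02 + 4 * c11 + 64 * c12 + 24 * c21 + 312 * c22;
      8 * c12 + 48 * c22;
      4 * c02 + 4 * c11 + 52 * c12 + 4 * c20 + 44 * c21 + 376 * c22;
      16 * c12 + 8 * c21 + 176 * c22;
      16 * c22;
      8 * c12 + 8 * c21 + 128 * c22;
      32 * c22;
      16 * c22].

Lemma size_shift P : size (shift P) = size shift_monomials.
Proof. by case: P => [[[[? ?] ?] [[? ?] ?]] [[? ?] ?]]. Qed.

Lemma eval_shift P s t :
  eval9 P (3 + 2 * s) (5 + 2 * s + 2 * t) = eval_monos shift_monomials (shift P) s t.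
Proof.
case: P => [[[[c00 c10] c20] [[c01 c11] c21]] [[c02 c12] c22]].
by cbv [shift eval9 eval3 eval_monos shift_monomials zip foldr]; ring.
Qed.

Definition entry (P : poly9) : poly9 * seq Z := (P, shift P).

Definition eq3 (r s : poly3) : bool :=
  let '(a0, a1, a2) := r in let '(b0, b1, b2) := s in (a0 =? b0) && (a1 =? b1) && (a2 =? b2).
Definition eq9 (P Q : poly9) : bool :=
  let '(P0, P1, P2) := P in let '(Q0, Q1, Q2) := Q in eq3 P0 Q0 && eq3 P1 Q1 && eq3 P2 Q2.

(* [eq9] is [==] on [poly9], restated for speed under [vm_compute]. *)
Lemma eq9E P Q : eq9 P Q = (P == Q).
Proof.
by case: P Q => [[[[? ?] ?] [[? ?] ?]] [[? ?] ?]] [[[[? ?] ?] [[? ?] ?]] [[? ?] ?]].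
Qed.

(* In the variables [p, q]: [q (q - p^2)], [q - p^2], [q (q - 3 + 2 p - p^2) - (2 p - 3)]
   and [(q - 1) (q - p^2)], the eigenvalue differences without a sign certificate. *)
Definition specials : seq poly9 :=
  [:: ((0, 0, 0), (0, 0, -1), (1, 0, 0)); ((0, 0, -1), (1, 0, 0), (0, 0, 0));
      ((3, -2, 0), (-3, 2, -1), (1, 0, 0)); ((0, 0, 1), (-1, 0, -1), (1, 0, 0))].

Definition differ (x y : poly9 * seq Z) : bool :=
  pos_cert (subZ x.2 y.2) || pos_cert (subZ y.2 x.2)
  || has (eq9 (sub9 x.1 y.1)) specials || has (eq9 (sub9 y.1 x.1)) specials.

Definition separates (T1 T2 : seq (poly9 * seq Z)) : bool :=
  has (fun x => all (differ x) T2) T1.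

Section Soundness.

Variables p q : nat.
Hypotheses (p_odd : odd p) (q_odd : odd q) (p_ge3 : (3 <= p)%nat) (p_lt_q : (p < q)%nat).
Hypothesis q_neq_p2 : q <> (p * p)%nat.

Local Notation zp := (Z.of_nat p).
Local Notation zq := (Z.of_nat q).

Lemma shift_params : exists s t, 0 <= s /\ 0 <= t /\ zp = 3 + 2 * s /\ zq = 5 + 2 * s + 2 * t.
Proof.
have hp := odd_double_half p; have hq := odd_double_half q.
rewrite p_odd in hp; rewrite q_odd in hq.
exists (Z.of_nat p./2 - 1), (Z.of_nat q./2 - Z.of_nat p./2 - 1); lia.
Qed.

Lemma pos_cert_shift P Q : pos_cert (subZ (shift P) (shift Q)) -> eval9 Q zp zq < eval9 P zp zq.
Proof.
have [s [t [s_ge0 [t_ge0 [-> ->]]]]] := shift_params.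
move=> /(pos_cert_sound (behead shift_monomials) s_ge0 t_ge0).
by rewrite eval_monos_sub ?size_shift // -!eval_shift; lia.
Qed.

Lemma special_neq0 S : S \in specials -> eval9 S zp zq <> 0.
Proof.
have zq_neq : zq <> zp * zp by rewrite -Nat2Z.inj_mul => /Nat2Z.inj.
have zp_ge3 : 3 <= zp by lia.
have zq_gt : zp + 2 <= zq by lia.
rewrite !inE => /or4P[] /eqP -> h.
- have : zq * (zq - zp * zp) = 0 by rewrite -h; cbv [eval9 eval3]; ring.
  by move/Z.mul_eq_0; lia.
- have : zq - zp * zp = 0 by rewrite -h; cbv [eval9 eval3]; ring.
  lia.
- pose r := zq - 3 + 2 * zp - zp * zp.
  have E : zq * r = 2 * zp - 3 by rewrite /r -[LHS]Z.sub_0_r -h; cbv [eval9 eval3]; ring.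
  have r_gt0 : 0 < r by apply/(Z.mul_pos_cancel_l _ _ (ltac:(lia) : 0 < zq)); lia.
  have : 0 <= zq * (r - 1) by apply: Z.mul_nonneg_nonneg; lia.
  rewrite Z.mul_sub_distr_l E => zq_le.
  have := Z.square_nonneg (zp - 2); rewrite /r in r_gt0; lia.
- have : (zq - 1) * (zq - zp * zp) = 0 by rewrite -h; cbv [eval9 eval3]; ring.
  by move/Z.mul_eq_0; lia.
Qed.

Lemma differ_sound P Q : differ (entry P) (entry Q) -> eval9 P zp zq <> eval9 Q zp zq.
Proof.
move=> /orP[/orP[/orP[/pos_cert_shift|/pos_cert_shift]|]|]; try lia.
all: move=> /hasP[S S_special]; rewrite eq9E => /eqP eqS PQ.
all: apply: (special_neq0 S_special); rewrite -eqS eval9_sub /= PQ; lia.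
Qed.

Lemma separates_sound Ps1 Ps2 : separates (map entry Ps1) (map entry Ps2) ->
  ~ {subset [seq eval9 P zp zq | P <- Ps1] <= [seq eval9 Q zp zq | Q <- Ps2]}.
Proof.
move=> /hasP[_ /mapP[P P_in ->] /allP P_differs] sub12.
have /mapP[Q Q_in eqPQ] := sub12 _ (map_f (fun P => eval9 P zp zq) P_in).
exact: differ_sound (P_differs _ (map_f entry Q_in)) eqPQ.
Qed.

End Soundness.

End IntPoly.

Import IntPoly.

Definition patterns : seq (seq (nat * nat)) :=
  [seq E <- subseqs exp_pairs | ((0, 0) \in E) && ((2, 2) \notin E)].

Lemma patterns_separated :
  pairwise (fun T1 T2 => separates T1 T2 || separates T2 T1)
    [seq map entry (eig_polys E) | E <- patterns].
Proof. by vm_compute. Qed.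

Lemma eig_values_inj (p q : nat) E1 E2 :
  odd p -> odd q -> 3 <= p -> p < q -> q <> p * p ->
  E1 \in patterns -> E2 \in patterns -> eig_values p q E1 =i eig_values p q E2 -> E1 = E2.
Proof.
move=> p_odd q_odd p_ge3 p_lt_q q_neq E1_pat E2_pat eqv.
pose sep E E' := separates (map entry (eig_polys E)) (map entry (eig_polys E')).
pose r E E' := (E == E') || sep E E' || sep E' E.
have r_sym : symmetric r by move=> E E'; rewrite /r eq_sym orbAC.
have : all2rel r patterns.
  rewrite -(pairwise_all2rel _ r_sym); last by move=> E; rewrite /r eqxx.
  have := patterns_separated; rewrite pairwise_map.
  by apply: sub_pairwise => E E' sepEE'; rewrite /r -orbA; apply/orP; right.
move=> /allrelP/(_ E1 E2 E1_pat E2_pat) /orP[/orP[/eqP //|]|] /separates_sound sep_sound;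
  by case: (sep_sound p q) => // v; rewrite eqv.
Qed.

Local Open Scope ring_scope.

Definition ZtoC (z : BinNums.Z) : algC := (int_of_Z z)%:~R.

Lemma ZtoC_add x y : ZtoC (BinInt.Z.add x y) = ZtoC x + ZtoC y.
Proof. by rewrite /ZtoC -intrD -(rmorphD int_of_Z). Qed.

Lemma ZtoC_sub x y : ZtoC (BinInt.Z.sub x y) = ZtoC x - ZtoC y.
Proof. by rewrite /ZtoC -intrB -(rmorphB int_of_Z). Qed.

Lemma ZtoC_mul x y : ZtoC (BinInt.Z.mul x y) = ZtoC x * ZtoC y.
Proof. by rewrite /ZtoC -intrM -(rmorphM int_of_Z). Qed.

Lemma ZtoC_nat m : ZtoC (BinInt.Z.of_nat m) = m%:R.
Proof. by rewrite /ZtoC; case: m => [|m] //=; rewrite Pnat.SuccNat2Pos.id_succ. Qed.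

Lemma ZtoC_inj : injective ZtoC.
Proof. by move=> x y /intr_inj /(can_inj int_of_ZK). Qed.

Lemma ZtoC_ram_poly x i a :
  ZtoC (eval3 (ram_poly i a) (BinInt.Z.of_nat x)) = ramanujan x i a.
Proof.
rewrite /ram_poly eval3_sub ZtoC_sub !eval3_multsum_poly !ZtoC_nat /ramanujan /multsum.
by case: ifP; case: ifP.
Qed.

Lemma ZtoC_eig_poly p q E i j :
  ZtoC (eval9 (eig_poly E (i, j)) (BinInt.Z.of_nat p) (BinInt.Z.of_nat q)) =
  \sum_(e <- E) ramanujan p i e.1 * ramanujan q j e.2.
Proof.
elim: E => [|e E IH]; first by rewrite big_nil eval9_zero.
by rewrite big_cons eval9_add eval9_tensor ZtoC_add ZtoC_mul !ZtoC_ram_poly IH.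
Qed.

Definition exps (p q : nat) (D : seq nat) : seq (nat * nat) :=
  [seq e <- exp_pairs | (p ^ e.1 * q ^ e.2)%N \in D].

Section ICGSpectrum.

Variables p q : nat.
Hypotheses (p_prime : prime p) (q_prime : prime q) (p_neq_q : p != q).

Local Notation n := (p ^ 2 * q ^ 2)%N.
Local Notation vp k := (logn p (gcdn k n)).
Local Notation vq k := (logn q (gcdn k n)).

Variable D : seq nat.

Lemma ICG_weight m :
  (if gcdn (m %% n) n \in D then 1 else 0) =
  \sum_(e <- exps p q D) (gcdn m n == p ^ e.1 * q ^ e.2)%N%:R :> algC.
Proof.
have [g_eq vp_le2 vq_le2] := dvdn_pq_logn p_prime q_prime p_neq_q (dvdn_gcdr m n).
rewrite gcdn_modl big_filter big_mkcond /=.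
rewrite (bigD1_seq (vp m, vq m)) ?mem_exp_pairs ?vp_le2 //= -g_eq eqxx big1 ?addr0.
  by case: ifP.
move=> [a b] ab_neq; rewrite [in gcdn m n == _]g_eq eqn_pq // eq_sym (negbTE ab_neq).
by case: ifP.
Qed.

Lemma eigenvalue_ICG x :
  eigenvalue (ICG_adj n D) x = (x \in map ZtoC (eig_values p q (exps p q D))).
Proof.
have n_gt0 := n_gt0 p_prime q_prime.
have [w w_prim] := C_prim_root_exists n_gt0.
pose a m : algC := if gcdn (m %% n) n \in D then 1 else 0.
have a_periodic m : a (m + n)%N = a m by rewrite /a modnDr.
have ICG_circ : ICG_adj n D = circulant n a by apply/matrixP => i j; rewrite !mxE.
have eigval_ICG k : circulant_eigval n w a k =
    ZtoC (eval9 (eig_poly (exps p q D) (vp k, vq k)) (BinInt.Z.of_nat p) (BinInt.Z.of_nat q)).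
  rewrite ZtoC_eig_poly /circulant_eigval.
  under eq_bigr do rewrite /a ICG_weight mulr_suml.
  rewrite exchange_big /=; apply: eq_bigr => e _.
  exact: sum_gcd_class.
rewrite ICG_circ /eig_values /eig_polys -!map_comp.
apply/idP/mapP => [|[[i j] ij_in ->]].
  move=> /(circulant_eigenvalueP w_prim a_periodic)[k ->].
  have [_ vp_le2 vq_le2] := dvdn_pq_logn p_prime q_prime p_neq_q (dvdn_gcdr k n).
  by exists (vp k, vq k); rewrite ?mem_exp_pairs ?vp_le2 ?eigval_ICG.
move: ij_in; rewrite mem_exp_pairs => /andP[i_le2 j_le2].
have k_dvd : (p ^ i * q ^ j %| n)%N by rewrite dvdn_mul // dvdn_exp2l.
have := circulant_eigenvalue w_prim a_periodic (p ^ i * q ^ j).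
by rewrite eigval_ICG (gcdn_idPl k_dvd) lognp_pq // lognq_pq; exact: id.
Qed.

Hypothesis D_proper : proper_divisor_set n D.

Lemma mem_exps d : (d \in D) = (d %| n)%N && ((logn p d, logn q d) \in exps p q D).
Proof.
apply/idP/andP => [d_in|[d_dvd]].
  have /andP[d_dvd _] := D_proper d_in.
  have [d_eq vp_le2 vq_le2] := dvdn_pq_logn p_prime q_prime p_neq_q d_dvd.
  by rewrite mem_filter mem_exp_pairs /= -d_eq d_in vp_le2 vq_le2.
have [d_eq _ _] := dvdn_pq_logn p_prime q_prime p_neq_q d_dvd.
by rewrite mem_filter /= -d_eq => /andP[].
Qed.

Lemma exps_in_patterns : 1%N \in D -> exps p q D \in patterns.
Proof.
move=> one_in; rewrite mem_filter filter_subseqs andbT !mem_filter /= muln1 one_in /=.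
by apply/negP => /andP[n_in _]; have := D_proper n_in; rewrite eqxx andbF.
Qed.

End ICGSpectrum.

Lemma eigenvalue_Spec n (A : 'M[algC]_n) x : eigenvalue A x = (0 < Spec A x)%N.
Proof. by rewrite eigenvalue_root_char -dvdp_XsubCl XsubC_dvd // monic_neq0 // char_poly_monic. Qed.

Theorem lemma3p27 (p q : nat) (D1 D2 : seq nat) :
  prime p -> prime q -> (3 <= p)%N -> (p < q)%N ->
  proper_divisor_set (p ^ 2 * q ^ 2) D1 ->
  proper_divisor_set (p ^ 2 * q ^ 2) D2 ->
  1%N \in D1 -> 1%N \in D2 ->
  Spec (ICG_adj (p ^ 2 * q ^ 2) D1) = Spec (ICG_adj (p ^ 2 * q ^ 2) D2) ->
  D1 =i D2.
Proof.
move=> p_prime q_prime p_ge3 p_lt_q D1_proper D2_proper one_D1 one_D2 spec_eq.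
have p_neq_q : p != q by rewrite neq_ltn p_lt_q.
have odd_big_prime r : prime r -> (3 <= r)%N -> odd r.
  by move=> r_prime r_ge3; apply/negPn/negP => /(prime_oddPn r_prime) r2; rewrite r2 in r_ge3.
have q_neq : q <> (p * p)%N.
  move=> q_eq; have : (p %| q)%N by rewrite q_eq dvdn_mulr.
  by rewrite dvdn_prime2 // (negbTE p_neq_q).
have q_ge3 : (3 <= q)%N := leq_trans p_ge3 (ltnW p_lt_q).
have exps_eq : exps p q D1 = exps p q D2.
  apply: (eig_values_inj (odd_big_prime _ p_prime p_ge3) (odd_big_prime _ q_prime q_ge3)
    p_ge3 p_lt_q q_neq (exps_in_patterns D1_proper one_D1) (exps_in_patterns D2_proper one_D2)).
  move=> v.
  rewrite -(mem_map ZtoC_inj) -eigenvalue_ICG // eigenvalue_Spec spec_eq -eigenvalue_Spec.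
  by rewrite eigenvalue_ICG // (mem_map ZtoC_inj).
by move=> d; rewrite (mem_exps p_prime q_prime p_neq_q D1_proper)
  (mem_exps p_prime q_prime p_neq_q D2_proper) exps_eq.
Qed.
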